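(* There exists $T_0>0$ depending only on $\lambda$ and $\alpha$ such that for any solution $s(t)$ of $\dot s_1=s_1\psi(s_1^2+s_2^2)\log\lambda$, $\dot s_2=-s_2\psi(s_1^2+s_2^2)\log\lambda$ with $s(0)\in D_{r_0}$, every time interval during which $s(t)$ stays in $D_{r_0}\setminus D_{r_0/2}$ has length less than $T_0$.
   Context: Here $\lambda>1$ is the largest eigenvalue of $A=\begin{pmatrix}2&1\\1&1\end{pmatrix}$, $0<\alpha<1$, $0<r_0<1$, $D_r=\{(s_1,s_2):s_1^2+s_2^2\le r\}$, and $\psi:[0,1]\to[0,1]$ is $C^\infty$ except at $0$, with $\psi(u)=1$ for $u\ge r_0$, $\psi'>0$ and decreasing on $(0,r_0)$, and $\psi(u)=(u/r_0)^\alpha$ for $0\le u\le r_0/2$. *)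

From Stdlib Require Import Reals Lra.
From Coquelicot Require Import Coquelicot.
Open Scope R_scope.

(* lam = largest eigenvalue of A = [[2,1],[1,1]]; its characteristic
   polynomial is x^2 - 3x + 1, whose largest root is (3 + sqrt 5)/2. *)
Definition lam : R := (3 + sqrt 5) / 2.

Definition inD (r s1 s2 : R) : Prop := s1 ^ 2 + s2 ^ 2 <= r.

(* The hypotheses on psi (psi given as a total function R -> R; only its
   values on [0,1] matter). *)
Definition psi_ok (alpha r0 : R) (psi : R -> R) : Prop :=
  (forall u, 0 <= u <= 1 -> 0 <= psi u <= 1) /\
  (* C^infty on (0,1) (psi is locally constant = 1 near 1, as r0 < 1) *)
  (forall (n : nat) u, 0 < u < 1 -> ex_derive_n psi n u) /\
  (forall u, r0 <= u <= 1 -> psi u = 1) /\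
  (forall u, 0 < u < r0 -> Derive psi u > 0) /\
  (forall u v, 0 < u -> u < v -> v < r0 -> Derive psi v <= Derive psi u) /\
  psi 0 = 0 /\
  (forall u, 0 < u <= r0 / 2 -> psi u = Rpower (u / r0) alpha).

(** The quantity [s1^2 - s2^2] increases along the flow: its derivative is
    [2 psi(|s|^2) ln lam |s|^2].  In the annulus [D_r0 \ D_(r0/2)] we have
    [|s|^2 > r0/2] and [psi(|s|^2) >= psi(r0/2) = 2^(-alpha) >= 1/2], so the
    derivative exceeds [ln lam * r0/2], whereas [s1^2 - s2^2] ranges over an
    interval of length [2 r0].  Hence the annulus is left within time
    [8 / ln lam], independently of [r0] and [psi]. *)
From Stdlib Require Import Reals Lra.
From Coquelicot Require Import Coquelicot.
Open Scope R_scope.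

Lemma ln_lam_pos : 0 < ln lam.
Proof.
  rewrite <- ln_1; apply ln_increasing; [lra|].
  unfold lam; pose proof (sqrt_pos 5); lra.
Qed.

Lemma Rpower_ge_base (x alpha : R) : 0 < x <= 1 -> alpha <= 1 -> x <= Rpower x alpha.
Proof.
  intros Hx Ha; unfold Rpower.
  assert (Hln : ln x <= 0) by (rewrite <- ln_1; apply ln_le; lra).
  rewrite <- (exp_ln x) at 1 by lra.
  assert (Hle : ln x <= alpha * ln x).
  { assert (0 <= (1 - alpha) * - ln x) by (apply Rmult_le_pos; lra); nra. }
  destruct (Rle_lt_or_eq_dec _ _ Hle) as [Hlt | Heq].
  - now left; apply exp_increasing.
  - now right; f_equal.
Qed.

Lemma growth_of_derive_gt (f df : R -> R) (a b m : R) :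
  (forall t, a < t < b -> is_derive f t (df t)) ->
  (forall t, a < t < b -> m < df t) ->
  forall x y, a < x -> x < y -> y < b -> m * (y - x) < f y - f x.
Proof.
  intros Hf Hm x y Hx Hxy Hy.
  assert (Hg : forall t : R, Rbar_lt a t -> Rbar_lt t b ->
                 is_derive (fun t => f t - m * t) t (df t - m)).
  { intros t Ha Hb; simpl in Ha, Hb.
    pose proof (is_derive_minus f (fun t => m * t) t _ _
                  (Hf t (conj Ha Hb)) (is_derive_scal _ t m _ (is_derive_id t))) as H.
    replace (df t - m) with (minus (df t) (m * one)) by (unfold minus, plus, opp, one; simpl; ring).
    exact H. }
  assert (Hpos : forall t : R, Rbar_lt a t -> Rbar_lt t b -> df t - m > 0).
  { intros t Ha Hb; simpl in Ha, Hb; specialize (Hm t (conj Ha Hb)); lra. }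
  pose proof (incr_function _ a b _ Hg Hpos x y Hx Hxy Hy); lra.
Qed.

Lemma is_derive_diff_squares (s1 s2 : R -> R) (t d1 d2 : R) :
  is_derive s1 t d1 -> is_derive s2 t d2 ->
  is_derive (fun t => s1 t ^ 2 - s2 t ^ 2) t (2 * s1 t * d1 - 2 * s2 t * d2).
Proof.
  intros D1 D2.
  pose proof (is_derive_minus _ _ t _ _ (is_derive_pow s1 2 t _ D1)
                                        (is_derive_pow s2 2 t _ D2)) as D.
  replace (2 * s1 t * d1 - 2 * s2 t * d2) with
    (minus (INR 2 * d1 * s1 t ^ 1) (INR 2 * d2 * s2 t ^ 1))
    by (unfold minus, plus, opp; simpl; ring).
  exact D.
Qed.

Section Psi.

Variables (alpha r0 : R) (psi : R -> R).
Hypotheses (Halpha : alpha <= 1) (Hr0 : 0 < r0 < 1) (Hpsi : psi_ok alpha r0 psi).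

Lemma psi_increasing (u v : R) : 0 < u -> u < v -> v < r0 -> psi u < psi v.
Proof.
  destruct Hpsi as (_ & Hsmooth & _ & Hderiv & _).
  apply (incr_function psi 0 r0 (Derive psi)); simpl.
  - intros x Hx0 Hxr; apply Derive_correct, (Hsmooth 1%nat); lra.
  - intros x Hx0 Hxr; apply Hderiv; lra.
Qed.

Lemma psi_ge_half (u : R) : r0 / 2 < u <= r0 -> 1 / 2 <= psi u.
Proof.
  intros Hu.
  destruct Hpsi as (_ & _ & Hone & _ & _ & _ & Hpow).
  destruct (Req_dec u r0) as [-> | Hne]; [rewrite Hone; lra|].
  assert (Hmid : 1 / 2 <= psi (r0 / 2)).
  { rewrite Hpow by lra; replace (r0 / 2 / r0) with (1 / 2) by (field; lra).
    apply Rpower_ge_base; lra. }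
  pose proof (psi_increasing (r0 / 2) u); lra.
Qed.

End Psi.

Theorem lemma5p6 :
  forall alpha : R, 0 < alpha < 1 ->
  exists T0 : R, 0 < T0 /\
  forall (r0 : R) (psi : R -> R), 0 < r0 < 1 -> psi_ok alpha r0 psi ->
  forall (lo hi : Rbar) (s1 s2 : R -> R),
    Rbar_lt lo 0 -> Rbar_lt 0 hi ->
    (forall t : R, Rbar_lt lo t -> Rbar_lt t hi ->
       is_derive s1 t (s1 t * psi (s1 t ^ 2 + s2 t ^ 2) * ln lam) /\
       is_derive s2 t (- s2 t * psi (s1 t ^ 2 + s2 t ^ 2) * ln lam)) ->
    inD r0 (s1 0) (s2 0) ->
    forall a b : R, a < b ->
    (forall t, a < t < b ->
       Rbar_lt lo t /\ Rbar_lt t hi /\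
       inD r0 (s1 t) (s2 t) /\ ~ inD (r0 / 2) (s1 t) (s2 t)) ->
    b - a < T0.
Proof.
  intros alpha Ha; pose proof ln_lam_pos as Hlam.
  exists (8 / ln lam); split; [apply Rdiv_lt_0_compat; lra|].
  intros r0 psi Hr Hpsi lo hi s1 s2 _ _ Hflow _ a b Hab Hin.
  set (u t := s1 t ^ 2 + s2 t ^ 2).
  assert (Hderiv : forall t, a < t < b ->
    is_derive (fun t => s1 t ^ 2 - s2 t ^ 2) t (2 * psi (u t) * ln lam * u t)).
  { intros t Ht; destruct (Hin t Ht) as (Hlo & Hhi & _).
    destruct (Hflow t Hlo Hhi) as [D1 D2].
    replace (2 * psi (u t) * ln lam * u t) with
      (2 * s1 t * (s1 t * psi (u t) * ln lam) - 2 * s2 t * (- s2 t * psi (u t) * ln lam))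
      by (unfold u; ring).
    now apply is_derive_diff_squares. }
  assert (Hspeed : forall t, a < t < b -> ln lam * (r0 / 2) < 2 * psi (u t) * ln lam * u t).
  { intros t Ht; destruct (Hin t Ht) as (_ & _ & Hout & Hann); unfold inD in *.
    pose proof (psi_ge_half alpha r0 psi ltac:(lra) Hr Hpsi (u t) ltac:(unfold u; lra)).
    assert (Hu : r0 / 2 < u t) by (unfold u; lra).
    assert (1 / 2 * (r0 / 2) < psi (u t) * u t) by nra; nra. }
  set (x := a + (b - a) / 4); set (y := b - (b - a) / 4).
  pose proof (growth_of_derive_gt _ _ a b _ Hderiv Hspeed x y
                ltac:(unfold x; lra) ltac:(unfold x, y; lra) ltac:(unfold y; lra)) as Hgrowth.
  destruct (Hin x ltac:(unfold x; lra)) as (_ & _ & Hx & _).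
  destruct (Hin y ltac:(unfold y; lra)) as (_ & _ & Hy & _); unfold inD in Hx, Hy.
  pose proof (pow2_ge_0 (s1 x)); pose proof (pow2_ge_0 (s2 y)).
  replace (y - x) with ((b - a) / 2) in Hgrowth by (unfold x, y; field).
  apply (Rmult_lt_reg_l (ln lam * r0)); [nra|].
  replace (ln lam * r0 * (8 / ln lam)) with (8 * r0) by (field; lra).
  nra.
Qed.
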